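(* Let $(a_k)_{k\ge1}$ be a sequence of positive real numbers for which there exist $\rho\in(0,1)$, constants $c,C>0$ and $m\in\mathbb{N}$ such that $ck^m\rho^k\le a_k\le Ck^m\rho^k$ for all sufficiently large $k$. Define $K(\epsilon)=\min\{k\in\mathbb{N}: a_k<\epsilon\}$ for $\epsilon>0$. Then, as $\epsilon\to0$, $$K(\epsilon)=\Omega\left(\frac{\rho}{1-\rho}\ln(1/\epsilon)\right)\quad\text{and}\quad K(\epsilon)=O\left(\frac{1}{1-\rho}\ln(1/\epsilon)\right),$$ and consequently $K(\epsilon)=\Theta\left(\frac{\rho}{1-\rho}\ln(1/\epsilon)\right)$. *)

From Stdlib Require Import Reals Lra Lia.
Open Scope R_scope.

(* [IsK a eps k]: k is the minimum of { k in N, k >= 1 : a_k < eps },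
   i.e. k = K(eps) in the paper (sequence indexed from 1; a 0 is unused). *)
Definition IsK (a : nat -> R) (eps : R) (k : nat) : Prop :=
  (1 <= k)%nat /\ a k < eps /\
  (forall j : nat, (1 <= j)%nat -> a j < eps -> (k <= j)%nat).

Definition K_Omega (a : nat -> R) (g : R -> R) : Prop :=
  exists c1 eps0, 0 < c1 /\ 0 < eps0 /\
    forall eps, 0 < eps < eps0 ->
      exists k, IsK a eps k /\ c1 * g eps <= INR k.

Definition K_O (a : nat -> R) (g : R -> R) : Prop :=
  exists C1 eps0, 0 < C1 /\ 0 < eps0 /\
    forall eps, 0 < eps < eps0 ->
      exists k, IsK a eps k /\ INR k <= C1 * g eps.

(* The function K(eps) is, up to constants, the inverse of the geometric rate rho^k.
   Since k^m >= 1, the lower bound a_k >= c rho^k forces every k with a_k < eps to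
   satisfy k |ln rho| > ln c + ln(1/eps), hence k is at least a multiple of ln(1/eps).
   Conversely k^m rho^k is bounded by a multiple of (sqrt rho)^k, so a_k < eps as soon
   as k exceeds a multiple of ln(1/eps).  Both bounds are proportional to ln(1/eps),
   and the factors rho/(1-rho) and 1/(1-rho) only rescale the constants. *)

From Stdlib Require Import Reals Lra Lia Wf_nat ZArith.
Open Scope R_scope.

Lemma nat_ceil (x : R) : 0 <= x -> exists n : nat, x < INR n /\ INR n <= x + 1.
Proof.
  intros Hx. destruct (archimed x) as [Hup Hup1].
  assert (Hz : (0 <= up x)%Z) by (apply le_IZR; lra).
  exists (Z.to_nat (up x)). rewrite INR_IZR_INZ, Z2Nat.id by exact Hz. lra.
Qed.

Lemma exp_pow (x : R) (n : nat) : exp x ^ n = exp (INR n * x).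
Proof. rewrite <- Rpower_pow by apply exp_pos. unfold Rpower. now rewrite ln_exp. Qed.

Lemma ln_lt_0 (x : R) : 0 < x < 1 -> ln x < 0.
Proof. intros Hx. rewrite <- ln_1. apply ln_increasing; lra. Qed.

Lemma ln_one_div (x : R) : 0 < x -> ln (1 / x) = - ln x.
Proof. intros Hx. unfold Rdiv. rewrite Rmult_1_l. now apply ln_Rinv. Qed.

(* With t := -ln s / (m + 1), the inequality t k <= exp (t k) gives
   (t k)^m s^k <= exp (k (m t + ln s)) <= 1. *)
Lemma pow_mul_geom_bounded (m : nat) (s : R) :
  0 < s < 1 -> exists B, forall k : nat, INR k ^ m * s ^ k <= B.
Proof.
  intros Hs.
  set (u := - ln s).
  assert (Hu : 0 < u) by (pose proof (ln_lt_0 s Hs); unfold u; lra).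
  assert (Hm : 0 <= INR m) by apply pos_INR.
  set (t := u / (INR m + 1)).
  assert (Ht : 0 < t) by (unfold t; apply Rdiv_lt_0_compat; lra).
  assert (Hmt : INR m * t <= u).
  { unfold t. apply Rmult_le_reg_r with (INR m + 1); [lra|].
    field_simplify; [nra|lra]. }
  exists (/ t ^ m). intros k.
  assert (Hk : 0 <= INR k) by apply pos_INR.
  assert (Hsk : 0 < s ^ k) by (apply pow_lt; lra).
  assert (Hkey : (t * INR k) ^ m * s ^ k <= 1).
  { apply Rle_trans with (exp (t * INR k) ^ m * s ^ k).
    - apply Rmult_le_compat_r; [lra|].
      apply pow_incr. pose proof (exp_ineq1_le (t * INR k)). split; nra.
    - rewrite <- (exp_ln s) by lra.
      rewrite !exp_pow, <- exp_plus, <- exp_0.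
      assert (Hexp : INR m * (t * INR k) + INR k * ln s <= 0) by (unfold u in Hmt; nra).
      destruct (Rle_lt_or_eq_dec _ _ Hexp) as [Hlt|Heq].
      + left. now apply exp_increasing.
      + rewrite Heq. lra. }
  rewrite Rpow_mult_distr in Hkey.
  assert (Htm : 0 < t ^ m) by (apply pow_lt; lra).
  apply Rmult_le_reg_l with (t ^ m); [exact Htm|].
  rewrite Rinv_r by lra. lra.
Qed.

Lemma sqrt_in_unit_interval (x : R) : 0 < x < 1 -> 0 < sqrt x < 1.
Proof. intros Hx. split; [now apply sqrt_lt_R0|]. rewrite <- sqrt_1. apply sqrt_lt_1; lra. Qed.

Lemma pow_mul_geom_le_sqrt (m : nat) (rho : R) :
  0 < rho < 1 -> exists D, 0 < D /\ forall k : nat, INR k ^ m * rho ^ k <= D * sqrt rho ^ k.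
Proof.
  intros Hrho. pose proof (sqrt_in_unit_interval rho Hrho) as Hs.
  destruct (pow_mul_geom_bounded m (sqrt rho) Hs) as [B HB].
  exists (Rmax B 1). split; [pose proof (Rmax_r B 1); lra|]. intros k.
  assert (Hsk : 0 < sqrt rho ^ k) by (apply pow_lt; lra).
  replace (rho ^ k) with (sqrt rho ^ k * sqrt rho ^ k)
    by (rewrite <- Rpow_mult_distr, sqrt_sqrt; lra).
  rewrite <- Rmult_assoc. apply Rmult_le_compat_r; [lra|].
  pose proof (HB k). pose proof (Rmax_l B 1). lra.
Qed.

Lemma IsK_exists (a : nat -> R) (eps : R) (k0 : nat) :
  (1 <= k0)%nat -> a k0 < eps -> exists k, IsK a eps k /\ (k <= k0)%nat.
Proof.
  intros Hk0 Hak0.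
  destruct (dec_inh_nat_subset_has_unique_least_element
              (fun j => (1 <= j)%nat /\ a j < eps)) as [k [[[Hk Hak] Hmin] _]].
  - intros n. destruct (le_lt_dec 1 n), (Rlt_dec (a n) eps); [left; auto|..];
      right; intros [? ?]; (lia || lra).
  - now exists k0.
  - exists k. repeat split; auto.
Qed.

Lemma prefix_lower_bound (a : nat -> R) (N : nat) :
  (forall k, (1 <= k)%nat -> 0 < a k) ->
  exists d, 0 < d /\ forall j, (1 <= j < N)%nat -> d <= a j.
Proof.
  intros Hpos. induction N as [|N [d [Hd Hdj]]].
  - exists 1. split; [lra|]. intros; lia.
  - destruct (le_lt_dec 1 N) as [HN|HN].
    + exists (Rmin d (a N)). split; [apply Rmin_pos; auto|].
      intros j Hj. destruct (Nat.eq_dec j N) as [->|Hne]; [apply Rmin_r|].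
      apply Rle_trans with d; [apply Rmin_l|apply Hdj; lia].
    + exists d. split; [exact Hd|]. intros j Hj. apply Hdj; lia.
Qed.

Lemma index_upper_bound (a : nat -> R) (N : nat) (D sigma : R) :
  0 < D -> 0 < sigma < 1 -> (forall k, (N <= k)%nat -> a k <= D * sigma ^ k) ->
  exists C1 eps0, 0 < C1 /\ 0 < eps0 /\ forall eps, 0 < eps < eps0 ->
    exists k, (1 <= k)%nat /\ a k < eps /\ INR k <= C1 * ln (1 / eps).
Proof.
  intros HD Hsigma Hup.
  set (u := - ln sigma).
  assert (Hu : 0 < u) by (pose proof (ln_lt_0 sigma Hsigma); unfold u; lra).
  set (M := Nat.max N 1).
  assert (HM : 0 <= INR M) by apply pos_INR.
  exists (INR M + 1 + 2 / u), (Rmin (/ exp 1) (/ D)).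
  split; [pose proof (Rdiv_lt_0_compat 2 u ltac:(lra) Hu); lra|].
  split; [apply Rmin_pos; apply Rinv_0_lt_compat; [apply exp_pos|exact HD]|].
  intros eps [Heps Heps0].
  rewrite ln_one_div by exact Heps. set (L := - ln eps).
  assert (HL1 : 1 < L).
  { assert (ln eps < ln (/ exp 1))
      by (apply ln_increasing; [lra|pose proof (Rmin_l (/ exp 1) (/ D)); lra]).
    rewrite ln_Rinv, ln_exp in H by apply exp_pos. unfold L; lra. }
  assert (HLD : ln D < L).
  { assert (Hlt : ln eps < ln (/ D))
      by (apply ln_increasing; [lra|pose proof (Rmin_r (/ exp 1) (/ D)); lra]).
    rewrite ln_Rinv in Hlt by exact HD. unfold L; lra. }
  destruct (nat_ceil (2 * L / u)) as [n [Hn1 Hn2]].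
  { apply Rmult_le_pos; [lra|left; now apply Rinv_0_lt_compat]. }
  assert (Hnu : 2 * L < INR n * u).
  { unfold Rdiv in Hn1. apply (Rmult_lt_compat_r u) in Hn1; [|exact Hu].
    rewrite Rmult_assoc, Rinv_l in Hn1 by lra. lra. }
  assert (Hn : 0 <= INR n) by apply pos_INR.
  exists (M + n)%nat. split; [unfold M; lia|]. split.
  - apply Rle_lt_trans with (D * sigma ^ (M + n)); [apply Hup; unfold M; lia|].
    assert (Hpow : 0 < sigma ^ (M + n)) by (apply pow_lt; lra).
    apply ln_lt_inv; [now apply Rmult_lt_0_compat|exact Heps|].
    rewrite ln_mult, ln_pow, plus_INR by lra.
    replace (ln sigma) with (- u) by (unfold u; ring).
    pose proof (Rmult_le_pos _ _ HM (Rlt_le _ _ Hu)). unfold L in *. lra.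
  - rewrite plus_INR.
    replace (2 * L / u) with (2 / u * L) in Hn2 by (field; lra).
    assert (0 < 2 / u) by (apply Rdiv_lt_0_compat; lra). nra.
Qed.

Lemma index_lower_bound (a : nat -> R) (N : nat) (c rho : R) :
  (forall k, (1 <= k)%nat -> 0 < a k) -> 0 < c -> 0 < rho < 1 ->
  (forall k, (N <= k)%nat -> c * rho ^ k <= a k) ->
  exists c1 eps0, 0 < c1 /\ 0 < eps0 /\ forall eps, 0 < eps < eps0 ->
    forall k, (1 <= k)%nat -> a k < eps -> c1 * ln (1 / eps) <= INR k.
Proof.
  intros Hpos Hc Hrho Hlow.
  destruct (prefix_lower_bound a N Hpos) as [d [Hd Hdj]].
  set (r := - ln rho).
  assert (Hr : 0 < r) by (pose proof (ln_lt_0 rho Hrho); unfold r; lra).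
  exists (/ (2 * r)), (Rmin d (c * c)).
  split; [apply Rinv_0_lt_compat; lra|].
  split; [apply Rmin_pos; [exact Hd|nra]|].
  intros eps [Heps Heps0] k Hk Hak.
  pose proof (Rmin_l d (c * c)). pose proof (Rmin_r d (c * c)).
  assert (HNk : (N <= k)%nat).
  { destruct (le_lt_dec N k) as [?|HkN]; [assumption|].
    pose proof (Hdj k (conj Hk HkN)). lra. }
  (* eps < c^2 gives ln c > ln eps / 2, which absorbs the constant c *)
  assert (Hlnc : ln eps < 2 * ln c).
  { replace (2 * ln c) with (ln (c * c)) by (rewrite ln_mult by lra; ring).
    apply ln_increasing; lra. }
  assert (Hpow : 0 < rho ^ k) by (apply pow_lt; lra).
  assert (Hlnk : ln (c * rho ^ k) < ln eps).
  { apply ln_increasing; [nra|]. pose proof (Hlow k HNk). lra. }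
  rewrite ln_mult, ln_pow in Hlnk by lra.
  replace (ln rho) with (- r) in Hlnk by (unfold r; ring).
  rewrite ln_one_div by exact Heps.
  apply Rmult_le_reg_l with (2 * r); [lra|].
  rewrite <- Rmult_assoc, Rinv_r by lra. lra.
Qed.

Lemma K_O_scale (a : nat -> R) (g : R -> R) (kappa : R) :
  0 < kappa -> K_O a g -> K_O a (fun eps => kappa * g eps).
Proof.
  intros Hk [C1 [eps0 [HC1 [Heps0 HO]]]].
  exists (C1 / kappa), eps0. split; [now apply Rdiv_lt_0_compat|]. split; [exact Heps0|].
  intros eps Heps. destruct (HO eps Heps) as [k [HK Hle]].
  exists k. split; [exact HK|]. replace (C1 / kappa * (kappa * g eps)) with (C1 * g eps)
    by (field; lra). exact Hle.
Qed.

Lemma K_Omega_scale (a : nat -> R) (g : R -> R) (kappa : R) :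
  0 < kappa -> K_Omega a g -> K_Omega a (fun eps => kappa * g eps).
Proof.
  intros Hk [c1 [eps0 [Hc1 [Heps0 HOm]]]].
  exists (c1 / kappa), eps0. split; [now apply Rdiv_lt_0_compat|]. split; [exact Heps0|].
  intros eps Heps. destruct (HOm eps Heps) as [k [HK Hle]].
  exists k. split; [exact HK|]. replace (c1 / kappa * (kappa * g eps)) with (c1 * g eps)
    by (field; lra). exact Hle.
Qed.

Section GeometricBounds.

Variables (a : nat -> R) (N : nat) (c rho D sigma : R).
Hypotheses (Hpos : forall k, (1 <= k)%nat -> 0 < a k)
  (Hc : 0 < c) (Hrho : 0 < rho < 1) (HD : 0 < D) (Hsigma : 0 < sigma < 1)
  (Hlow : forall k, (N <= k)%nat -> c * rho ^ k <= a k)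
  (Hup : forall k, (N <= k)%nat -> a k <= D * sigma ^ k).

Lemma K_O_ln_inv : K_O a (fun eps => ln (1 / eps)).
Proof.
  destruct (index_upper_bound a N D sigma HD Hsigma Hup) as [C1 [eps0 [HC1 [Heps0 Hidx]]]].
  exists C1, eps0. repeat split; [assumption..|]. intros eps Heps.
  destruct (Hidx eps Heps) as [k0 [Hk0 [Hak0 Hle]]].
  destruct (IsK_exists a eps k0 Hk0 Hak0) as [k [HK Hkk0]].
  exists k. split; [exact HK|]. apply le_INR in Hkk0. lra.
Qed.

Lemma K_Omega_ln_inv : K_Omega a (fun eps => ln (1 / eps)).
Proof.
  destruct (index_upper_bound a N D sigma HD Hsigma Hup) as [C1 [eps0 [_ [Heps0 Hidx]]]].
  destruct (index_lower_bound a N c rho Hpos Hc Hrho Hlow)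
    as [c1 [eps1 [Hc1 [Heps1 Hbound]]]].
  exists c1, (Rmin eps0 eps1). split; [exact Hc1|]. split; [now apply Rmin_pos|].
  intros eps Heps. pose proof (Rmin_l eps0 eps1). pose proof (Rmin_r eps0 eps1).
  destruct (Hidx eps ltac:(lra)) as [k0 [Hk0 [Hak0 _]]].
  destruct (IsK_exists a eps k0 Hk0 Hak0) as [k [HK _]].
  exists k. split; [exact HK|]. destruct HK as [Hk [Hak _]].
  apply (Hbound eps ltac:(lra) k Hk Hak).
Qed.

End GeometricBounds.

Theorem lemmaB1 (a : nat -> R) (rho c C : R) (m : nat)
  (Hpos : forall k : nat, (1 <= k)%nat -> 0 < a k)
  (Hrho : 0 < rho < 1) (Hc : 0 < c) (HC : 0 < C)
  (Hbnd : exists N : nat, forall k : nat, (N <= k)%nat ->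
            c * INR k ^ m * rho ^ k <= a k /\ a k <= C * INR k ^ m * rho ^ k) :
  K_Omega a (fun eps => rho / (1 - rho) * ln (1 / eps)) /\
  K_O a (fun eps => 1 / (1 - rho) * ln (1 / eps)) /\
  (K_Omega a (fun eps => rho / (1 - rho) * ln (1 / eps)) /\
   K_O a (fun eps => rho / (1 - rho) * ln (1 / eps))).
Proof.
  destruct Hbnd as [N HN].
  destruct (pow_mul_geom_le_sqrt m rho Hrho) as [D [HD Hsqrt]].
  pose proof (sqrt_in_unit_interval rho Hrho) as Hs.
  assert (Hlow : forall k, (Nat.max N 1 <= k)%nat -> c * rho ^ k <= a k).
  { intros k Hk. destruct (HN k ltac:(lia)) as [Hak _].
    assert (Hkm : 1 <= INR k ^ m) by (apply pow_R1_Rle, (le_INR 1); lia).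
    assert (Hcr : 0 <= c * rho ^ k) by (pose proof (pow_lt rho k ltac:(lra)); nra).
    pose proof (Rmult_le_compat_l _ _ _ Hcr Hkm).
    replace (c * INR k ^ m * rho ^ k) with (c * rho ^ k * INR k ^ m) in Hak by ring. lra. }
  assert (Hup : forall k, (Nat.max N 1 <= k)%nat -> a k <= C * D * sqrt rho ^ k).
  { intros k Hk. destruct (HN k ltac:(lia)) as [_ Hak].
    pose proof (Hsqrt k). rewrite Rmult_assoc in Hak |- *. nra. }
  assert (HCD : 0 < C * D) by nra.
  pose proof (K_O_ln_inv a _ (C * D) (sqrt rho) HCD Hs Hup) as HO.
  pose proof (K_Omega_ln_inv a _ c rho _ _ Hpos Hc Hrho HCD Hs Hlow Hup) as HOm.
  assert (Hk1 : 0 < rho / (1 - rho)) by (apply Rdiv_lt_0_compat; lra).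
  assert (Hk2 : 0 < 1 / (1 - rho)) by (apply Rdiv_lt_0_compat; lra).
  repeat split;
    [apply K_Omega_scale | apply K_O_scale | apply K_Omega_scale | apply K_O_scale];
    assumption.
Qed.
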